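(* Let $m,n$ be natural numbers with $m>2$ and $n>1$. The following are equivalent: (i) for every semigroup variety $\mathcal X\subseteq\mathcal D_m$, one has $\operatorname{Nil}(\mathcal A_n\vee\mathcal X)=\operatorname{ZR}(\mathcal X)$; (ii) $n\ge m-1$.
   Context: $\operatorname{var}\Sigma$ denotes the semigroup variety defined by identities $\Sigma$. For a word $w$ and a letter $x$ not occurring in $w$, the symbolic identity $w=0$ stands for the pair $wx=xw=w$. $\mathcal A_n=\operatorname{var}\{x^ny=y,\ xy=yx\}$ (Abelian groups of exponent dividing $n$). $\mathcal D_m=\operatorname{var}\{x^m=0,\ xy=yx\}$. For a periodic semigroup variety $\mathcal Y$, $\operatorname{Nil}(\mathcal Y)$ is its greatest nil-subvariety (a nil-variety is one all of whose semigroups are nil-semigroups). $\mathcal{COM}$ is the variety of all commutative semigroups. Identities of the form $w=0$ are called 0-reduced; a commutative variety is 0-reduced in $\mathbf{Com}$ if it is defined within $\mathcal{COM}$ by 0-reduced identities only. For a commutative nil-variety $\mathcal X$, $\operatorname{ZR}(\mathcal X)$ is the least variety that is 0-reduced in $\mathbf{Com}$ and contains $\mathcal X$ (it is defined within $\mathcal{COM}$ by all 0-reduced identities holding in $\mathcal X$). Joins $\vee$ are taken in the lattice of semigroup varieties. *)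

From mathcomp Require Import all_boot.
Set Implicit Arguments. Unset Strict Implicit. Unset Printing Implicit Defensive.

Record semigroup := Semigroup {
  carrier :> Type;
  sop : carrier -> carrier -> carrier;
  sopA : forall x y z, sop x (sop y z) = sop (sop x y) z;
  sne : inhabited carrier }.

(* Words of the free semigroup over letters nat: nonempty sequences,
   represented as (first letter, rest). *)
Definition word := (nat * seq nat)%type.
Definition wseq (w : word) : seq nat := w.1 :: w.2.
Definition wcat (u v : word) : word := (u.1, u.2 ++ wseq v).
Definition wlet (x : nat) : word := (x, [::]).
(* x^k for k >= 1 : x^(k.+1) *)
Definition wpow (x k : nat) : word := (x, nseq k x).

Definition eval (S : semigroup) (v : nat -> S) (w : word) : S :=
  foldl (fun acc x => sop acc (v x)) (v w.1) w.2.

Definition identity := (word * word)%type.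

Definition satisfies (S : semigroup) (e : identity) : Prop :=
  forall v : nat -> S, eval v e.1 = eval v e.2.

Definition sclass := semigroup -> Prop.
Definition subclass (V W : sclass) : Prop := forall S, V S -> W S.
Definition eqclass (V W : sclass) : Prop := forall S, V S <-> W S.

Definition Mod (Sig : identity -> Prop) : sclass :=
  fun S => forall e, Sig e -> satisfies S e.
Definition Id (V : sclass) : identity -> Prop :=
  fun e => forall S, V S -> satisfies S e.

Definition is_variety (V : sclass) : Prop :=
  exists Sig, eqclass V (Mod Sig).

Definition vjoin (V W : sclass) : sclass := Mod (fun e => Id V e /\ Id W e).

Fixpoint spow (S : semigroup) (x : S) (k : nat) : S :=
  if k is k'.+1 then sop x (spow x k') else x.  (* spow x k = x^(k+1) *)
Definition is_zero (S : semigroup) (z : S) : Prop :=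
  forall x, sop z x = z /\ sop x z = z.
Definition nil_semigroup (S : semigroup) : Prop :=
  exists z : S, is_zero z /\ forall x : S, exists k, spow x k = z.
Definition nil_class (V : sclass) : Prop := forall S, V S -> nil_semigroup S.

Definition greatest_nil_subvariety (Y N : sclass) : Prop :=
  [/\ is_variety N, subclass N Y, nil_class N &
      forall N', is_variety N' -> subclass N' Y -> nil_class N' -> subclass N' N].

(* symbolic identity w = 0: wx = w and xw = w, x a letter not in w *)
Definition fresh (w : word) : nat := (foldr maxn 0 (wseq w)).+1.
Definition zero_ids (w : word) : identity -> Prop :=
  fun e => e = (wcat w (wlet (fresh w)), w) \/ e = (wcat (wlet (fresh w)) w, w).

Definition comm_id : identity := (wcat (wlet 0) (wlet 1), wcat (wlet 1) (wlet 0)).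

(* A_n = var{x^n y = y, xy = yx} *)
Definition A_var (n : nat) : sclass :=
  Mod (fun e => e = (wcat (wpow 0 n.-1) (wlet 1), wlet 1) \/ e = comm_id).
(* D_m = var{x^m = 0, xy = yx} *)
Definition D_var (m : nat) : sclass :=
  Mod (fun e => zero_ids (wpow 0 m.-1) e \/ e = comm_id).
Definition COM : sclass := Mod (fun e => e = comm_id).

Definition sat_zero (X : sclass) (w : word) : Prop :=
  forall e, zero_ids w e -> Id X e.

Definition ZR (X : sclass) : sclass :=
  Mod (fun e => e = comm_id \/ exists w, sat_zero X w /\ zero_ids w e).

From Pilot Require Import Defs.
From mathcomp Require Import all_boot zify.
Set Implicit Arguments. Unset Strict Implicit. Unset Printing Implicit Defensive.

(* If n >= m - 1, take an identity u = v of A_n \/ X whose two sides have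
   different contents.  Evaluating in Z_n shows that some letter x occurs in u
   and v with different multiplicities congruent mod n; as x^m = 0 in X, both
   sides then vanish in X, so u = 0 and v = 0 hold in ZR(X), whence u = v.
   Conversely, a nil-semigroup of A_n \/ X satisfies w x^n = w for every
   0-reduced identity w = 0 of X, and substituting the zero for x gives w = 0.
   If n <= m - 2, let X be defined within D_m by x^(n+1) y = x y^(n+1), which
   also holds in A_n.  The monomials x^a y^b with a + b <= n + 2 and a, b < m
   form a semigroup in ZR(X) violating it: it maps onto the semigroup of X
   obtained by identifying x y^(n+1) with x^(n+1) y, and that map reflects 0. *)


Section Evaluation.
Variable S : semigroup.
Implicit Types (h : nat -> S) (w : word).

Lemma foldl_sopl h a b s :
  foldl (fun acc x => sop acc (h x)) (sop a b) s =
  sop a (foldl (fun acc x => sop acc (h x)) b s).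
Proof. by elim: s a b => //= x s IHs a b; rewrite -sopA IHs. Qed.

Lemma eval_wcat h u v : eval h (wcat u v) = sop (eval h u) (eval h v).
Proof. by rewrite /eval /= foldl_cat /= foldl_sopl. Qed.

Lemma spowSr (a : S) k : spow a k.+1 = sop (spow a k) a.
Proof. by elim: k => //= k IHk; rewrite {1}IHk sopA. Qed.

Lemma eval_wpow h x k : eval h (wpow x k) = spow (h x) k.
Proof.
rewrite /eval /=; elim: k => // k IHk.
by rewrite -{1}addn1 nseqD foldl_cat IHk spowSr.
Qed.

Lemma eq_in_eval h h' w : {in wseq w, h =1 h'} -> eval h w = eval h' w.
Proof.
case: w => x s eq_hh'; rewrite /eval /= eq_hh' ?mem_head //.
have {eq_hh'}: {in s, h =1 h'} by move=> y ys; apply: eq_hh'; rewrite inE ys orbT.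
elim: s (h' x) => //= y s IHs a eq_hh'.
rewrite eq_hh' ?mem_head // IHs // => z zs.
by apply: eq_hh'; rewrite inE zs orbT.
Qed.

Lemma eval_morph (T : semigroup) (f : S -> T) :
  {morph f : a b / sop a b} -> forall h w, f (eval h w) = eval (f \o h) w.
Proof.
move=> fM h [x s]; rewrite /eval /=.
by elim: s (h x) => //= y s IHs a; rewrite IHs fM.
Qed.

Lemma fresh_notin w : fresh w \notin wseq w.
Proof.
suff le_max y : y \in wseq w -> y <= foldr maxn 0 (wseq w).
  by apply/negP => /le_max; rewrite ltnn.
elim: (wseq w) => // z s IHs; rewrite inE => /predU1P [->|/IHs le_ys] /=.
  exact: leq_maxl.
exact: leq_trans le_ys (leq_maxr _ _).
Qed.

Lemma eval_eta_notin h w x a :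
  x \notin wseq w -> eval [eta h with x |-> a] w = eval h w.
Proof.
move=> xNw; apply: eq_in_eval => y yw /=.
by case: eqP => // eq_yx; rewrite -eq_yx yw in xNw.
Qed.

Lemma spow_zero (z : S) k : is_zero z -> spow z k = z.
Proof. by move=> zz; elim: k => //= k ->; exact: (zz z).1. Qed.
End Evaluation.

Definition zero_word (T : semigroup) (w : word) :=
  forall (h : nat -> T) (a : T),
  sop (eval h w) a = eval h w /\ sop a (eval h w) = eval h w.

Lemma zero_idsP (T : semigroup) w :
  (forall e, zero_ids w e -> satisfies T e) <-> zero_word T w.
Proof.
split=> [sat_w h a | zw e [->|->] h /=]; last 2 first.
- by rewrite eval_wcat; exact: (zw h _).1.
- by rewrite eval_wcat; exact: (zw h _).2.
have /= := sat_w _ (or_introl erefl) [eta h with fresh w |-> a].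
have /= := sat_w _ (or_intror erefl) [eta h with fresh w |-> a].
rewrite !eval_wcat !(eval_eta_notin _ _ (fresh_notin w)) /eval /= eqxx.
by move=> -> ->.
Qed.

Lemma sat_zeroP (X : sclass) w : sat_zero X w <-> forall T, X T -> zero_word T w.
Proof.
split=> [zX T XT | zX e ew T XT]; last exact: (zero_idsP T w).2 (zX T XT) e ew.
by apply/zero_idsP => e ew; exact: zX e ew T XT.
Qed.

Lemma zero_word_wpow (T : semigroup) x k : zero_word T (wpow x k) ->
  forall a b : T, sop (spow a k) b = spow a k /\ sop b (spow a k) = spow a k.
Proof. by move=> zw a b; have := zw (fun=> a) b; rewrite eval_wpow. Qed.

Lemma comm_idP (T : semigroup) : satisfies T comm_id <-> commutative (@sop T).
Proof.
split=> [sat_C a b | sopC h]; last by rewrite /= !eval_wcat sopC.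
by have := sat_C (fun k => if k == 0 then a else b); rewrite /= !eval_wcat.
Qed.

Lemma zero_word_comm (T : semigroup) w : commutative (@sop T) ->
  (forall (h : nat -> T) a, sop (eval h w) a = eval h w) -> zero_word T w.
Proof. by move=> sopC zw h a; rewrite [sop a _]sopC zw. Qed.

Lemma foldl_perm (A : Type) (B : eqType) (f : A -> B -> A) :
  right_commutative f -> forall a s t, perm_eq s t -> foldl f a s = foldl f a t.
Proof.
move=> fAC a s; elim: s a => [|x s IHs] a t pst.
  by case: t pst => // y t; rewrite perm_sym => /perm_nilP.
have xt : x \in t by rewrite -(perm_mem pst) mem_head.
case/splitPr: xt pst => t1 t2 pst; have pt : perm_eq s (t1 ++ t2).
  by rewrite -(perm_cons x) (perm_trans pst) // -cat1s perm_catCA.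
rewrite /= (IHs _ _ pt); elim: t1 {pst pt} a => //= y t1 IHt1 a.
by rewrite fAC IHt1.
Qed.

Lemma filter_pred1 (T : eqType) (x : T) s : filter (pred1 x) s = nseq (count_mem x s) x.
Proof. by rewrite -size_filter; apply/all_pred1P; rewrite filter_all. Qed.

Section Commutative.
Variable T : semigroup.
Hypothesis sopC : commutative (@sop T).
Implicit Types (h : nat -> T) (w : word).

Let sop_rc h : right_commutative (fun a x => sop a (h x)).
Proof. by move=> a x y; rewrite -!sopA [sop (h x) _]sopC. Qed.

Lemma eval_perm h u v : perm_eq (wseq u) (wseq v) -> eval h u = eval h v.
Proof.
case: u v => x s [y t] /= puv; rewrite /eval /=.
have [eq_xy|neq_xy] := eqVneq x y.
  by rewrite -eq_xy in puv *; apply: foldl_perm; rewrite // -(perm_cons x).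
have ys : y \in s.
  by have := perm_mem puv y; rewrite !inE eqxx eq_sym (negbTE neq_xy).
have ps := perm_to_rem ys.
have pt : perm_eq t (x :: rem y s).
  rewrite -(perm_cons y) perm_sym; apply: perm_trans puv.
  by rewrite (perm_catCA [:: y] [:: x]) /= perm_cons perm_sym.
by rewrite (foldl_perm _ _ ps) // (foldl_perm _ _ pt) //= sopC.
Qed.

Lemma eval_absorbing_pow h w x k : k < count_mem x (wseq w) ->
  (forall a, sop (spow (h x) k) a = spow (h x) k) -> eval h w = spow (h x) k.
Proof.
move=> lt_k powA.
set r := nseq (count_mem x (wseq w) - k.+1) x ++ filter (predC1 x) (wseq w).
have pw : perm_eq (wseq w) (wseq (x, nseq k x ++ r)).
  rewrite /wseq /= -cat_cons -[x :: nseq k x]/(nseq k.+1 x) catA -nseqD subnKC //.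
  by rewrite -filter_pred1 perm_sym perm_filterC.
rewrite (eval_perm h pw) /eval /= foldl_cat -[foldl _ _ (nseq k x)]/(eval h (wpow x k)).
rewrite eval_wpow; elim: r {pw} => //= y r; by rewrite powA.
Qed.
End Commutative.

Section CyclicGroup.
Variable n : nat.
Hypothesis n_gt0 : 0 < n.

Definition zadd (a b : 'I_n) : 'I_n := Ordinal (ltn_pmod (a + b) n_gt0).

Lemma zaddA : associative zadd.
Proof. by move=> a b c; apply: val_inj; rewrite /= modnDmr modnDml addnA. Qed.

Definition Zmod : semigroup := @Defs.Semigroup 'I_n zadd zaddA (inhabits (Ordinal n_gt0)).

Lemma val_eval_Zmod (h : nat -> Zmod) w :
  val (eval h w) = sumn [seq val (h y) | y <- wseq w] %% n.
Proof.
case: w => x s; rewrite /eval /=; elim: s (h x) => [|y s IHs] a /=.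
  by rewrite addn0 modn_small.
by rewrite IHs /= modnDml addnA.
Qed.

Lemma Zmod_A : A_var n Zmod.
Proof.
move=> e [->|->] h; apply: val_inj; rewrite !val_eval_Zmod /=.
  by rewrite map_cat sumn_cat map_nseq sumn_nseq /= addnA -mulnS prednK // modnMDl.
by rewrite !addn0 addnC.
Qed.

Lemma Zmod_count_eq u v x : satisfies Zmod (u, v) ->
  count_mem x (wseq u) = count_mem x (wseq v) %[mod n].
Proof.
move=> sat_uv.
pose h y : Zmod := if y == x then Ordinal (ltn_pmod 1 n_gt0) else Ordinal n_gt0.
have sumn_h s : sumn [seq val (h y) | y <- s] = count_mem x s * (1 %% n).
  by elim: s => //= y s ->; rewrite /h eq_sym; case: (x == y).
by have := congr1 val (sat_uv h); rewrite /= !val_eval_Zmod !sumn_h !modnMmr !muln1.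
Qed.
End CyclicGroup.

(** * Sufficiency of n >= m - 1 *)

Lemma zero_words_of_count_gap (T : semigroup) k n u v x :
  commutative (@sop T) -> (forall a b : T, sop (spow a k) b = spow a k) -> k <= n ->
  satisfies T (u, v) -> count_mem x (wseq u) < count_mem x (wseq v) ->
  count_mem x (wseq u) = count_mem x (wseq v) %[mod n] ->
  zero_word T u /\ zero_word T v.
Proof.
move=> sopC powA le_kn sat_uv lt_uv eq_uv.
suff zu : forall (h : nat -> T) a, sop (eval h u) a = eval h u.
  by split; apply: zero_word_comm => // h a; rewrite -(sat_uv h) zu.
move=> h a.
case cu : (count_mem x (wseq u)) => [|c].
  have xNu : x \notin wseq u by apply/count_memPn.
  (* substituting x^(k+1) for x leaves u unchanged but makes v vanish *)
  rewrite -(eval_eta_notin _ (spow (h x) k) xNu) sat_uv /=.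
  have v_x : 0 < count_mem x (wseq v) by rewrite -cu.
  by rewrite (eval_absorbing_pow sopC v_x) /= eqxx ?powA // => b; rewrite powA.
have lt_k : k < count_mem x (wseq v).
  move/esym/eqP: eq_uv; rewrite eqn_mod_dvd; last exact: ltnW.
  by move=> /dvdn_leq; rewrite subn_gt0 => /(_ lt_uv); rewrite cu; lia.
by rewrite sat_uv (eval_absorbing_pow sopC lt_k).
Qed.

Lemma D_varP m (T : semigroup) : D_var m T ->
  commutative (@sop T) /\ forall a b : T, sop (spow a m.-1) b = spow a m.-1.
Proof.
move=> DT; split; first by apply/comm_idP; apply: DT; right.
have zw : zero_word T (wpow 0 m.-1) by apply/zero_idsP => e ew; apply: DT; left.
by move=> a b; case: (zero_word_wpow zw a b).
Qed.

Lemma ZR_comm (X : sclass) (S : semigroup) : ZR X S -> commutative (@sop S).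
Proof. by move=> ZS; apply/comm_idP; apply: ZS; left. Qed.

Lemma ZR_zero_word (X : sclass) (S : semigroup) w :
  ZR X S -> sat_zero X w -> zero_word S w.
Proof. by move=> ZS zw; apply/zero_idsP => e ew; apply: ZS; right; exists w. Qed.

Section Sufficiency.
Variables (m n : nat) (X : sclass).
Hypothesis XD : subclass X (D_var m).

Lemma ZR_variety : is_variety (ZR X).
Proof. by eexists=> S; apply: iff_refl. Qed.

Lemma ZR_nil : nil_class (ZR X).
Proof.
move=> S ZS; have zS : zero_word S (wpow 0 m.-1).
  apply: ZR_zero_word ZS _; apply/sat_zeroP => T XT.
  by apply/zero_idsP => e ew; apply: (XD XT); left.
have [a0] := sne S; exists (spow a0 m.-1); split; first exact: zero_word_wpow zS a0.
move=> a; exists m.-1.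
by rewrite -(zero_word_wpow zS a (spow a0 m.-1)).1 (zero_word_wpow zS a0 _).2.
Qed.

Lemma ZR_sub_join : 0 < n -> m.-1 <= n -> subclass (ZR X) (vjoin (A_var n) X).
Proof.
move=> n_gt0 le_mn S ZS [u v] [Au Xu] h /=.
have sopC := ZR_comm ZS.
have [|] := boolP (perm_eq (wseq u) (wseq v)); first exact: eval_perm.
rewrite /perm_eq => /allPn [x _ neq_uv].
have {}neq_uv : count_mem x (wseq u) != count_mem x (wseq v) := neq_uv.
have eq_uv := Zmod_count_eq x (Au _ (@Zmod_A _ n_gt0)).
suff zX : forall T, X T -> zero_word T u /\ zero_word T v.
  have zu : zero_word S u by apply: ZR_zero_word ZS _; apply/sat_zeroP => T /zX [].
  have zv : zero_word S v by apply: ZR_zero_word ZS _; apply/sat_zeroP => T /zX [].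
  by rewrite -(zu h (eval h v)).1 sopC (zv h _).1.
move=> T XT; have [sopCT powA] := D_varP (XD XT).
have sat_uv : satisfies T (u, v) := Xu T XT.
case: ltngtP neq_uv => // lt_uv _.
  exact: zero_words_of_count_gap sopCT powA le_mn sat_uv lt_uv eq_uv.
have sat_vu : satisfies T (v, u) by move=> h'; rewrite /= sat_uv.
by have [] := zero_words_of_count_gap sopCT powA le_mn sat_vu lt_uv (esym eq_uv).
Qed.

Lemma nil_sub_ZR (N : sclass) :
  subclass N (vjoin (A_var n) X) -> nil_class N -> subclass N (ZR X).
Proof.
move=> NJ Nnil S NS.
have satS e : Id (A_var n) e -> Id X e -> satisfies S e.
  by move=> Ae Xe; exact: NJ S NS e (conj Ae Xe).
have [z [zz _]] := Nnil S NS.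
move=> e [->|[w [zw ew]]].
  by apply: satS => T HT; [apply: HT; right | apply: (XD HT); right].
apply: (zero_idsP S w).2 _ e ew; set x := fresh w.
have sat_wx : satisfies S (wcat w (wpow x n.-1), w).
  apply: satS => T HT h /=; rewrite eval_wcat eval_wpow.
    have sopCT : commutative (@sop T) by apply/comm_idP; apply: HT; right.
    have := HT _ (or_introl erefl) (fun k => if k == 0 then h x else eval h w).
    by rewrite /= eval_wcat eval_wpow /= sopCT.
  exact: ((sat_zeroP X w).1 zw T HT h _).1.
have eval_w h : eval h w = z.
  have := sat_wx [eta h with x |-> z].
  rewrite /= eval_wcat eval_wpow (eval_eta_notin _ _ (fresh_notin w)) /= eqxx.
  by rewrite spow_zero // => <-; exact: (zz _).2.
by move=> h a; rewrite eval_w; exact: zz.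
Qed.

Lemma greatest_nil_join_ZR :
  0 < n -> m.-1 <= n -> greatest_nil_subvariety (vjoin (A_var n) X) (ZR X).
Proof.
move=> n_gt0 le_mn; split; [exact: ZR_variety | exact: ZR_sub_join | exact: ZR_nil |].
by move=> N _; exact: nil_sub_ZR.
Qed.
End Sufficiency.

(** * A counterexample when n < m - 1 *)

Section Twist.
Variables (S : semigroup) (f : S -> S).
Hypotheses (sop_fl : forall a b, sop (f a) b = sop a b)
           (sop_fr : forall a b, sop a (f b) = sop a b).

Definition twist_op a b := f (sop a b).

Lemma twist_opA : associative twist_op.
Proof. by move=> a b c; rewrite /twist_op sop_fl sop_fr sopA. Qed.

Definition twist : semigroup := @Defs.Semigroup S twist_op twist_opA (sne S).

Lemma twist_morph : {morph f : a b / sop a b >-> @sop twist a b}.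
Proof. by move=> a b; rewrite /= /twist_op sop_fl sop_fr. Qed.

Lemma spow_twist (a : S) k : @spow twist a k.+1 = f (spow a k.+1).
Proof.
elim: k => // k IHk.
by rewrite -[LHS]/(twist_op a (@spow twist a k.+1)) IHk /twist_op sop_fr.
Qed.
End Twist.

Definition mon := (nat * nat)%type.
Definition deg (p : mon) := p.1 + p.2.
Definition madd (p q : mon) : mon := (p.1 + q.1, p.2 + q.2).
Definition mscale k (p : mon) : mon := (k * p.1, k * p.2).

Lemma maddC : commutative madd.
Proof. by move=> p q; rewrite /madd addnC [p.2 + _]addnC. Qed.

Lemma maddA : associative madd.
Proof. by move=> p q r; rewrite /madd !addnA. Qed.

Lemma deg_madd p q : deg (madd p q) = deg p + deg q.
Proof. by rewrite /deg /=; lia. Qed.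

Lemma deg_mscale k p : deg (mscale k p) = k * deg p.
Proof. by rewrite /deg mulnDr. Qed.

Lemma madd_mscale k p : madd p (mscale k p) = mscale k.+1 p.
Proof. by rewrite /madd /mscale !mulSn. Qed.

(* The monomial x^a y^b is the pair (a, b); (0, 0) serves as the zero, and
   [ok] selects the monomials that survive in the Rees quotient. *)
Section Rees.
Variable ok : pred mon.
Hypothesis ok_madd : forall p q, ok (madd p q) -> ok p.

Definition rmul p q :=
  if [&& 0 < deg p, 0 < deg q & ok (madd p q)] then madd p q else (0, 0).

Lemma rmulC : commutative rmul.
Proof. by move=> p q; rewrite /rmul maddC andbCA. Qed.

Let rmul3 p q r := if [&& 0 < deg p, 0 < deg q, 0 < deg r & ok (madd (madd p q) r)]
  then madd (madd p q) r else (0, 0).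

Let rmulAl p q r : rmul (rmul p q) r = rmul3 p q r.
Proof.
rewrite {2}/rmul /rmul3; case: ifP => [/and3P [p0 q0 ok_pq] | Npq].
  by rewrite /rmul deg_madd addn_gt0 p0 q0.
rewrite /rmul /=; case: ifP => // /and4P [p0 q0 r0 ok_pqr].
by rewrite p0 q0 (ok_madd ok_pqr) in Npq.
Qed.

Lemma rmulA : associative rmul.
Proof.
move=> p q r; rewrite rmulAl rmulC rmulAl /rmul3 [madd _ p]maddC maddA.
by case: (0 < deg p); case: (0 < deg q); case: (0 < deg r).
Qed.

Lemma rmul0p p : rmul (0, 0) p = (0, 0). Proof. by []. Qed.
Lemma rmulp0 p : rmul p (0, 0) = (0, 0). Proof. by rewrite rmulC. Qed.

Definition Rees : semigroup := @Defs.Semigroup mon rmul rmulA (inhabits (0, 0)).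

Lemma spow_Rees (a : Rees) k :
  spow a k.+1 = if (0 < deg a) && ok (mscale k.+2 a) then mscale k.+2 a else (0, 0).
Proof.
elim: k => [|k IHk].
  by case: a => a1 a2; rewrite /= /rmul /mscale !mul2n -!addnn andbA andbb.
rewrite -[LHS]/(rmul a (spow a k.+1)) IHk; case: ifP => [/andP [a0 ok_a] | N_a].
  by rewrite /rmul deg_mscale muln_gt0 a0 madd_mscale.
rewrite /rmul andbF; case: ifP => // /andP [a0 ok_a].
by rewrite a0 (ok_madd (q := a)) // maddC madd_mscale in N_a.
Qed.
End Rees.

Section Counterexample.
Variables m n : nat.
Hypotheses (n_gt0 : 0 < n) (lt_n1_m : n.+1 < m).

Definition trunc_ok (p : mon) := [&& deg p <= n.+2, p.1 < m & p.2 < m].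

Lemma trunc_ok_madd p q : trunc_ok (madd p q) -> trunc_ok p.
Proof.
case: p q => a b [c d]; rewrite /trunc_ok /deg /= => /and3P [? ? ?].
by apply/and3P; split; lia.
Qed.

Local Notation tmul := (rmul trunc_ok).
Definition Trunc := Rees trunc_ok_madd.

Lemma tmul_deg_gt p q : n.+2 < deg p + deg q -> tmul p q = (0, 0).
Proof.
move=> lt_deg.
by rewrite /rmul /trunc_ok deg_madd (leqNgt (deg p + deg q)) lt_deg !andbF.
Qed.

Definition swap_top (p : mon) : mon := if p == (1, n.+1) then (n.+1, 1) else p.

Lemma tmul_swap_topl p q : tmul (swap_top p) q = tmul p q.
Proof.
rewrite /swap_top; case: eqP => // ->.
case: (posnP (deg q)) => [q0|q0]; first by rewrite /rmul q0 !andbF.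
by rewrite !tmul_deg_gt //; move: q0; rewrite /deg /=; lia.
Qed.

Lemma tmul_swap_topr p q : tmul p (swap_top q) = tmul p q.
Proof. by rewrite rmulC tmul_swap_topl rmulC. Qed.

(* [Trunc] with x y^(n+1) identified with x^(n+1) y; the point (1, n.+1) stays
   in the carrier as an element that is never a product. *)
Definition Twisted := @twist Trunc swap_top tmul_swap_topl tmul_swap_topr.

Lemma spow_Trunc_m (a : Trunc) : spow a m.-1 = (0, 0).
Proof.
have -> : m.-1 = m.-2.+1 by lia.
rewrite spow_Rees (_ : m.-2.+2 = m); last by lia.
case: ifP => // /andP []; case: a => a1 a2.
rewrite /trunc_ok /deg /mscale /= => a0 /and3P [_ lt1 lt2].
have [a1_0|a1_gt0] := posnP a1; last by have := leq_pmulr m a1_gt0; lia.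
have a2_gt0 : 0 < a2 by lia.
by have := leq_pmulr m a2_gt0; lia.
Qed.

Lemma sop_Twisted (a b : Twisted) : sop a b = swap_top (tmul a b).
Proof. by []. Qed.

Lemma spow_Twisted_m (a : Twisted) : spow a m.-1 = (0, 0).
Proof.
have Em : m.-1 = m.-2.+1 by lia.
by rewrite Em spow_twist -Em spow_Trunc_m.
Qed.

Lemma tmul_spow_n_deg (a b : Trunc) :
  tmul (spow a n) b != (0, 0) -> deg a = 1 /\ deg b = 1.
Proof.
rewrite -(prednK n_gt0) spow_Rees prednK //.
case: ifP => [/andP [a0 _] | _]; last by rewrite /rmul.
rewrite /rmul; case: ifP => [/and3P [_ b0 /and3P [le_deg _ _]] _ | _]; last first.
  by rewrite eqxx.
by move: le_deg; rewrite deg_madd deg_mscale; nia.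
Qed.

Lemma tmul_madd p q :
  0 < deg p -> 0 < deg q -> trunc_ok (madd p q) -> tmul p q = madd p q.
Proof. by rewrite /rmul => -> -> ->. Qed.

Lemma spow_Trunc_n a1 a2 : a1 + a2 = 1 -> @spow Trunc (a1, a2) n = mscale n.+1 (a1, a2).
Proof.
move=> deg1; rewrite -(prednK n_gt0) spow_Rees prednK // ifT // /trunc_ok /mscale /deg /=.
by apply/and4P; split; nia.
Qed.

Lemma tmul_spow_x_y : tmul (@spow Trunc (1, 0) n) (0, 1) = (n.+1, 1).
Proof.
rewrite spow_Trunc_n // tmul_madd /madd /mscale /trunc_ok /deg /= ?muln1 ?muln0 ?addn0 //.
by apply/and3P; split; lia.
Qed.

Lemma tmul_spow_y_x : tmul (@spow Trunc (0, 1) n) (1, 0) = (1, n.+1).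
Proof.
rewrite spow_Trunc_n // tmul_madd /madd /mscale /trunc_ok /deg /= ?muln1 ?muln0 ?addn0 //.
by apply/and3P; split; lia.
Qed.

Lemma deg1P p : deg p = 1 -> p = (1, 0) \/ p = (0, 1).
Proof. by case: p => [[|[|a1]] [|[|a2]]] //; rewrite /deg /= ?addnS; [right|left]. Qed.

Lemma swap_top_tmul_spow (a b : Trunc) :
  swap_top (tmul (spow a n) b) = swap_top (tmul (spow b n) a).
Proof.
have top_sym (a' b' : Trunc) : tmul (spow a' n) b' != (0, 0) ->
    swap_top (tmul (spow a' n) b') = swap_top (tmul (spow b' n) a').
  move=> /tmul_spow_n_deg [da db]; have [->|neq_ab] := eqVneq a' b'; first by [].
  have swap_top_n1 : swap_top (n.+1, 1) = (n.+1, 1).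
    by rewrite /swap_top; case: eqP => // -[]; lia.
  by case: (deg1P da) (deg1P db) neq_ab => -> [] -> //= _;
    rewrite tmul_spow_x_y tmul_spow_y_x swap_top_n1 /swap_top eqxx.
have [ab0|/top_sym //] := eqVneq (tmul (spow a n) b) (0, 0).
have [ba0|/top_sym -> //] := eqVneq (tmul (spow b n) a) (0, 0).
by rewrite ab0 ba0.
Qed.

Lemma swap_top_deg p : deg (swap_top p) = deg p.
Proof. by rewrite /swap_top; case: eqP => // ->; rewrite /deg /= addnC. Qed.

Lemma swap_top_eq0 p : swap_top p = (0, 0) -> p = (0, 0).
Proof. by rewrite /swap_top; case: eqP. Qed.

Lemma Twisted_fix_x (e : Twisted) : sop e (1, 0) = e -> e = (0, 0).
Proof.
move=> fix_e; have {}fix_e : swap_top (tmul e (1, 0)) = e := fix_e.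
have [e0|] := eqVneq (tmul e (1, 0)) (0, 0); first by rewrite -fix_e e0.
move: fix_e; rewrite /rmul; case: ifP => // _ /(congr1 deg).
by rewrite swap_top_deg deg_madd /deg /=; lia.
Qed.

Definition xn1y := wcat (wpow 0 n) (wlet 1).
Definition xyn1 := wcat (wlet 0) (wpow 1 n).
Definition cex_ids e := (zero_ids (wpow 0 m.-1) e \/ e = comm_id) \/ e = (xn1y, xyn1).

Lemma cex_ids_sub_D : subclass (Mod cex_ids) (D_var m).
Proof. by move=> T XT e De; apply: XT; left. Qed.

Lemma Twisted_in_cex : Mod cex_ids Twisted.
Proof.
move=> e [[De|->]|->].
- apply: (zero_idsP Twisted _).2 De => h a.
  by rewrite eval_wpow spow_Twisted_m !sop_Twisted rmul0p rmulp0.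
- by apply: (comm_idP Twisted).2 => a b; rewrite !sop_Twisted rmulC.
- move=> h; rewrite /= !eval_wcat !eval_wpow -(prednK n_gt0) !spow_twist prednK //.
  rewrite !sop_Twisted tmul_swap_topl tmul_swap_topr [tmul (h 0) _]rmulC.
  exact: swap_top_tmul_spow.
Qed.

Lemma Trunc_in_ZR : ZR (Mod cex_ids) Trunc.
Proof.
move=> e [->|[w [zw ew]]]; first by apply/comm_idP; exact: rmulC.
apply: (zero_idsP Trunc w).2 ew => g a.
have zT : zero_word Twisted w := (sat_zeroP _ w).1 zw _ Twisted_in_cex.
have eval0 : eval g w = (0, 0).
  apply/swap_top_eq0/Twisted_fix_x.
  by rewrite (@eval_morph Trunc Twisted _ (twist_morph _ _)) (zT _ (1, 0)).1.
by rewrite eval0; split; [exact: rmul0p | exact: rmulp0].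
Qed.

Lemma xn1y_in_join : Id (A_var n) (xn1y, xyn1) /\ Id (Mod cex_ids) (xn1y, xyn1).
Proof.
split=> T HT; last by apply: HT; right.
have pow_id (a b : T) : sop (spow a n.-1) b = b.
  have := HT _ (or_introl erefl) (fun k => if k == 0 then a else b).
  by rewrite /= eval_wcat eval_wpow.
by move=> h; rewrite /= !eval_wcat !eval_wpow /= -(prednK n_gt0) !spowSr !pow_id.
Qed.

Lemma ZR_not_sub_join : ~ subclass (ZR (Mod cex_ids)) (vjoin (A_var n) (Mod cex_ids)).
Proof.
move=> sub.
have := sub _ Trunc_in_ZR _ xn1y_in_join (fun k => if k == 0 then (1, 0) else (0, 1)).
rewrite /= !eval_wcat !eval_wpow /= [tmul (1, 0) _]rmulC tmul_spow_x_y tmul_spow_y_x.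
by case; lia.
Qed.
End Counterexample.

Theorem mainTheorem3 (m n : nat) (hm : 2 < m) (hn : 1 < n) :
  (forall Sig : identity -> Prop, subclass (Mod Sig) (D_var m) ->
     greatest_nil_subvariety (vjoin (A_var n) (Mod Sig)) (ZR (Mod Sig)))
  <-> m.-1 <= n.
Proof.
have n_gt0 : 0 < n by lia.
split=> [greatest | le_mn Sig XD]; last exact: greatest_nil_join_ZR XD n_gt0 le_mn.
rewrite leqNgt; apply/negP => lt_nm.
have [_ sub _ _] := greatest _ (@cex_ids_sub_D m n).
by apply: (ZR_not_sub_join n_gt0 _ sub); lia.
Qed.
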